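(* Let $g(x)=1-(1-x^2)^4$ for $|x|\le1$ and $g(x)=1$ otherwise. Fix $0\le q_o<\widetilde{q_o}$ and let $(q,p)$, respectively $(\widetilde q,\widetilde p)$, be the global solutions of $\dot q=p$, $\dot p=-g'(q)$ with initial data $(q_o,2)$, respectively $(\widetilde{q_o},2)$, at time $0$. Then $q(t)<\widetilde q(t)$ for all $t\ge0$. *)

From Stdlib Require Import Reals.
From Coquelicot Require Import Coquelicot.
Open Scope R_scope.

Definition g (x : R) : R :=
  if Rle_dec (Rabs x) 1 then 1 - (1 - x ^ 2) ^ 4 else 1.

Definition is_global_solution (q p : R -> R) : Prop :=
  forall t : R, is_derive q t (p t) /\ is_derive p t (- Derive g (q t)).

(* The energy p^2/2 + g(q) is conserved and 0 <= g <= 1, so p^2 >= 2 and,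
   since p(0) = 2, the speed stays positive.  If qo >= 1, both particles stay
   where g = 1 and move at speed 2, so their gap is constant.  If qo < 1, then
   g(qo) < g(qo'), and the energy identity forces p < p' at any time where the
   positions coincide: the gap q' - q has positive derivative at each of its
   zeros, so, being positive at time 0, it never vanishes for t >= 0. *)

From Stdlib Require Import Reals Lra Psatz.
From Coquelicot Require Import Coquelicot.
Open Scope R_scope.

Lemma Rabs_le_1_iff x : Rabs x <= 1 <-> x ^ 2 <= 1.
Proof.
  rewrite <- pow2_abs. pose proof (Rabs_pos x). split; intros; nra.
Qed.

Lemma g_inside x : x ^ 2 <= 1 -> g x = 1 - (1 - x ^ 2) ^ 4.
Proof.
  intros Hx. unfold g. destruct Rle_dec as [|Hn]; [reflexivity|].
  now exfalso; apply Hn, Rabs_le_1_iff.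
Qed.

Lemma g_outside x : 1 <= x ^ 2 -> g x = 1.
Proof.
  intros Hx. unfold g. destruct Rle_dec as [Hle|]; [|reflexivity].
  apply Rabs_le_1_iff in Hle. replace (x ^ 2) with 1 by lra. ring.
Qed.

Lemma g_bounds x : 0 <= g x <= 1.
Proof.
  destruct (Rle_lt_dec (x ^ 2) 1) as [Hx|Hx]; [|rewrite g_outside by lra; lra].
  rewrite g_inside by exact Hx.
  assert (Hu : 0 <= (1 - x ^ 2) ^ 2 <= 1) by (split; nra).
  replace ((1 - x ^ 2) ^ 4) with (((1 - x ^ 2) ^ 2) ^ 2) by ring.
  split; nra.
Qed.

Lemma g_lt_of_lt a b : 0 <= a < 1 -> a < b -> g a < g b.
Proof.
  intros Ha Hab. rewrite g_inside by nra.
  assert (Hpos : 0 < (1 - a ^ 2) ^ 4) by (apply pow_lt; nra).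
  destruct (Rle_lt_dec (b ^ 2) 1) as [Hb|Hb]; [|rewrite g_outside by lra; lra].
  rewrite g_inside by exact Hb.
  assert (Hba : 0 <= 1 - b ^ 2 < 1 - a ^ 2) by (split; nra).
  assert (Hsq : (1 - b ^ 2) ^ 2 < (1 - a ^ 2) ^ 2) by nra.
  replace ((1 - a ^ 2) ^ 4) with (((1 - a ^ 2) ^ 2) ^ 2) by ring.
  replace ((1 - b ^ 2) ^ 4) with (((1 - b ^ 2) ^ 2) ^ 2) by ring.
  pose proof (pow2_ge_0 (1 - b ^ 2)). nra.
Qed.

Lemma derivable_pt_lim_0_of_sq_bound f x K :
  (forall h, Rabs h < 1 -> Rabs (f (x + h) - f x) <= K * h ^ 2) ->
  derivable_pt_lim f x 0.
Proof.
  intros Hf eps Heps.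
  assert (Hdelta : 0 < Rmin 1 (eps / (Rabs K + 1))).
  { apply Rmin_glb_lt; [lra|]. pose proof (Rabs_pos K). apply Rdiv_lt_0_compat; lra. }
  exists (mkposreal _ Hdelta). simpl. intros h Hh0 Hh.
  pose proof (Rmin_l 1 (eps / (Rabs K + 1))). pose proof (Rmin_r 1 (eps / (Rabs K + 1))).
  pose proof (Rabs_pos_lt h Hh0). pose proof (Rabs_pos K). pose proof (Rle_abs K).
  specialize (Hf h ltac:(lra)). rewrite <- (pow2_abs h) in Hf.
  rewrite Rminus_0_r. unfold Rdiv. rewrite Rabs_mult, Rabs_inv.
  apply Rle_lt_trans with (K * Rabs h).
  - apply (Rmult_le_reg_r (Rabs h)); [lra|]. rewrite Rmult_assoc, Rinv_l by lra. nra.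
  - assert (Rabs h * (Rabs K + 1) < eps).
    { apply (Rmult_lt_reg_r (/ (Rabs K + 1))); [apply Rinv_0_lt_compat; lra|].
      rewrite Rmult_assoc, Rinv_r by lra. lra. }
    nra.
Qed.

Lemma g_increment_le_sq_outside x h : 1 <= x ^ 2 -> Rabs h < 1 ->
  Rabs (g (x + h) - g x) <= 10 * h ^ 2.
Proof.
  intros Hx Hh. rewrite (g_outside x Hx).
  assert (Hh2 : h ^ 2 < 1) by (rewrite <- (pow2_abs h); pose proof (Rabs_pos h); nra).
  set (y := x + h).
  destruct (Rle_lt_dec (y ^ 2) 1) as [Hy|Hy].
  2: rewrite g_outside, Rminus_diag, Rabs_R0 by lra; nra.
  (* Here 0 <= 1 - y^2 <= x^2 - y^2 = - h (x + y), with x + y bounded. *)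
  rewrite g_inside by exact Hy.
  assert (Hxy : (x + y) ^ 2 <= 10) by (unfold y in *; nra).
  assert (Hdiff : (x ^ 2 - y ^ 2) ^ 2 = h ^ 2 * (x + y) ^ 2) by (unfold y; ring).
  assert (Hu : (1 - y ^ 2) ^ 2 <= 10 * h ^ 2) by nra.
  replace (1 - (1 - y ^ 2) ^ 4 - 1) with (- ((1 - y ^ 2) ^ 2 * (1 - y ^ 2) ^ 2)) by ring.
  assert (Hu1 : 0 <= (1 - y ^ 2) ^ 2 <= 1) by (split; nra).
  rewrite Rabs_Ropp, Rabs_pos_eq by nra. nra.
Qed.

Lemma is_derive_g_inside x : -1 < x < 1 -> is_derive g x (8 * x * (1 - x ^ 2) ^ 3).
Proof.
  intros Hx.
  apply is_derive_ext_loc with (f := fun y => 1 - (1 - y ^ 2) ^ 4).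
  - apply locally_interval with (-1) 1; simpl; try lra.
    intros y Hy1 Hy2. symmetry. apply g_inside. nra.
  - auto_derive; [exact I|]. ring.
Qed.

Lemma ex_derive_g x : ex_derive g x.
Proof.
  destruct (Rlt_le_dec (x ^ 2) 1) as [Hx|Hx].
  - exists (8 * x * (1 - x ^ 2) ^ 3). apply is_derive_g_inside. nra.
  - exists 0. apply is_derive_Reals, (derivable_pt_lim_0_of_sq_bound _ _ 10).
    intros h Hh. now apply g_increment_le_sq_outside.
Qed.

Lemma is_derive_continuity_pt f x l : is_derive f x l -> continuity_pt f x.
Proof.
  intros Hf. apply derivable_continuous_pt. exists l. now apply is_derive_Reals.
Qed.

Lemma MVT_everywhere f f' a b : (forall t, is_derive f t (f' t)) ->
  exists c, Rmin a b <= c <= Rmax a b /\ f b - f a = f' c * (b - a).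
Proof.
  intros Hf. apply MVT_gen; intros; [apply Hf | eapply is_derive_continuity_pt, Hf].
Qed.

Lemma continuity_pt_pos_near f x : continuity_pt f x -> 0 < f x ->
  exists eps, 0 < eps /\ forall y, Rabs (y - x) < eps -> 0 < f y.
Proof.
  intros Hf Hx. destruct (Hf (f x) Hx) as [eps [Heps Hnear]].
  exists eps. split; [exact Heps|]. intros y Hy.
  destruct (Req_dec y x) as [->|Hyx]; [exact Hx|].
  specialize (Hnear y (conj (conj I (not_eq_sym Hyx)) Hy)).
  apply Rabs_def2 in Hnear. lra.
Qed.

Lemma derivable_pt_lim_pos_left f x l : derivable_pt_lim f x l -> 0 < l ->
  exists eps, 0 < eps /\ forall h, 0 < h < eps -> f (x - h) < f x.
Proof.
  intros Hf Hl. destruct (Hf l Hl) as [eps Hnear].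
  exists eps. split; [apply cond_pos|]. intros h Hh.
  assert (Hq : 0 < (f (x + - h) - f x) / - h).
  { specialize (Hnear (- h) ltac:(lra) ltac:(rewrite Rabs_Ropp, Rabs_pos_eq; lra)).
    apply Rabs_def2 in Hnear. lra. }
  unfold Rdiv in Hq. rewrite Rinv_opp in Hq.
  pose proof (Rinv_0_lt_compat h ltac:(lra)). unfold Rminus. nra.
Qed.

Lemma first_zero (d : R -> R) t1 : continuity d -> 0 < d 0 -> 0 <= t1 -> d t1 <= 0 ->
  exists c, 0 < c <= t1 /\ d c = 0 /\ forall u, 0 <= u < c -> 0 < d u.
Proof.
  intros Hd Hd0 Ht1 Hdt1.
  set (E := fun s => forall u, 0 <= u <= s -> 0 < d u).
  assert (HE0 : E 0) by (intros u Hu; replace u with 0 by lra; exact Hd0).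
  assert (HEt1 : is_upper_bound E t1).
  { intros s Hs. apply Rnot_lt_le. intros Hlt. specialize (Hs t1 ltac:(lra)). lra. }
  destruct (completeness E (ex_intro _ t1 HEt1) (ex_intro _ 0 HE0)) as [c [Hub Hlub]].
  assert (Hc0 : 0 <= c) by (apply Hub, HE0).
  assert (Hct1 : c <= t1) by (apply Hlub, HEt1).
  assert (Hbefore : forall u, 0 <= u < c -> 0 < d u).
  { intros u Hu. apply Rnot_le_lt. intros Hdu.
    enough (c <= u) by lra.
    apply Hlub. intros s Hs. apply Rnot_lt_le. intros Hsu. specialize (Hs u ltac:(lra)). lra. }
  assert (Hdc_le : d c <= 0).
  { apply Rnot_lt_le. intros Hdc.
    destruct (continuity_pt_pos_near d c (Hd c) Hdc) as [eps [Heps Hnear]].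
    enough (HE : E (c + eps / 2)) by (pose proof (Hub _ HE); lra).
    intros u Hu. destruct (Rlt_le_dec u c); [apply Hbefore; lra|].
    apply Hnear. rewrite Rabs_pos_eq; lra. }
  assert (Hc_pos : 0 < c) by (destruct Hc0 as [|<-]; lra).
  exists c. repeat split; [lra | lra | | exact Hbefore].
  apply Rle_antisym; [exact Hdc_le|]. apply Rnot_lt_le. intros Hdc.
  destruct (IVT_gen d 0 c 0 Hd) as [u [Hu Hdu]].
  - rewrite Rmin_right, Rmax_left by lra. lra.
  - rewrite Rmin_left, Rmax_right in Hu by lra.
    destruct (Req_dec u c) as [->|]; [lra|].
    pose proof (Hbefore u ltac:(lra)). lra.
Qed.

Lemma pos_of_deriv_pos_at_zeros (d d' : R -> R) :
  (forall t, is_derive d t (d' t)) -> 0 < d 0 ->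
  (forall t, 0 <= t -> d t = 0 -> 0 < d' t) ->
  forall t, 0 <= t -> 0 < d t.
Proof.
  intros Hd Hd0 Hcross t1 Ht1. apply Rnot_le_lt. intros Hdt1.
  assert (Hcont : continuity d) by (intros x; eapply is_derive_continuity_pt, Hd).
  destruct (first_zero d t1 Hcont Hd0 Ht1 Hdt1) as [c [Hc [Hdc Hbefore]]].
  destruct (derivable_pt_lim_pos_left d c (d' c)) as [eps [Heps Hleft]].
  { apply is_derive_Reals, Hd. }
  { apply Hcross; lra. }
  set (h := Rmin eps c / 2).
  assert (Hh : 0 < h < eps /\ h < c).
  { pose proof (Rmin_l eps c). pose proof (Rmin_r eps c).
    pose proof (Rmin_glb_lt eps c 0 Heps (proj1 Hc)). unfold h. lra. }
  pose proof (Hleft h ltac:(lra)). pose proof (Hbefore (c - h) ltac:(lra)). lra.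
Qed.

Section Trajectory.

Variables q p : R -> R.
Hypothesis sol : is_global_solution q p.

Lemma energy_conserved s t : p t ^ 2 / 2 + g (q t) = p s ^ 2 / 2 + g (q s).
Proof.
  assert (Hder : forall u, is_derive (fun u => p u ^ 2 / 2 + g (q u)) u 0).
  { intros u. destruct (sol u) as [Hq Hp].
    auto_derive.
    - repeat split; [eexists; exact Hp | apply ex_derive_g | eexists; exact Hq].
    - change (Derive (fun x : R => p x) u) with (Derive p u).
      change (Derive (fun x : R => q x) u) with (Derive q u).
      change (fun x : R => g x) with g.
      rewrite (is_derive_unique _ _ _ Hp), (is_derive_unique _ _ _ Hq). field. }
  destruct (MVT_everywhere _ _ s t Hder) as [c [_ Hc]]. lra.
Qed.

Hypothesis p0 : p 0 = 2.

Lemma speed_sq t : p t ^ 2 = 4 + 2 * g (q 0) - 2 * g (q t).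
Proof. pose proof (energy_conserved 0 t) as E. rewrite p0 in E. lra. Qed.

Lemma speed_pos t : 0 < p t.
Proof.
  apply Rnot_le_lt. intros Hpt.
  destruct (IVT_gen p 0 t 0) as [s [_ Hps]].
  - intros x. apply (is_derive_continuity_pt _ _ _ (proj2 (sol x))).
  - rewrite p0, Rmin_right, Rmax_left by lra. lra.
  - pose proof (speed_sq s) as Hs. rewrite Hps in Hs.
    pose proof (g_bounds (q 0)). pose proof (g_bounds (q s)). lra.
Qed.

Lemma position_le a b : a <= b -> q a <= q b.
Proof.
  intros Hab. destruct (MVT_everywhere q p a b (fun t => proj1 (sol t))) as [c [_ Hc]].
  pose proof (speed_pos c). nra.
Qed.

Lemma speed_eq_2_of_ge_1 t : 1 <= q 0 -> 0 <= t -> p t = 2.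
Proof.
  intros Hq0 Ht. pose proof (speed_sq t) as Hs. pose proof (position_le 0 t Ht).
  rewrite !g_outside in Hs by nra. pose proof (speed_pos t). nra.
Qed.

End Trajectory.

Lemma speed_lt_where_positions_meet q p q' p' t :
  is_global_solution q p -> p 0 = 2 -> is_global_solution q' p' -> p' 0 = 2 ->
  0 <= q 0 < 1 -> q 0 < q' 0 -> q t = q' t -> p t < p' t.
Proof.
  intros Hs Hp0 Hs' Hp0' Hq0 Hlt Hmeet.
  pose proof (speed_sq q p Hs Hp0 t) as E. pose proof (speed_sq q' p' Hs' Hp0' t) as E'.
  pose proof (g_lt_of_lt _ _ Hq0 Hlt). rewrite Hmeet in E.
  pose proof (speed_pos q p Hs Hp0 t). pose proof (speed_pos q' p' Hs' Hp0' t). nra.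
Qed.

Theorem lemma5p11 (qo qo' : R) (q p q' p' : R -> R) :
  0 <= qo -> qo < qo' ->
  is_global_solution q p -> q 0 = qo -> p 0 = 2 ->
  is_global_solution q' p' -> q' 0 = qo' -> p' 0 = 2 ->
  forall t : R, 0 <= t -> q t < q' t.
Proof.
  intros Hqo Hlt Hs Hq0 Hp0 Hs' Hq0' Hp0' t Ht. subst qo qo'.
  assert (Hgap : forall s, is_derive (fun s => q' s - q s) s (p' s - p s)).
  { intros s. apply is_derive_Reals, derivable_pt_lim_minus;
      apply is_derive_Reals; [apply Hs' | apply Hs]. }
  enough (0 < q' t - q t) by lra.
  destruct (Rlt_le_dec (q 0) 1) as [Hin|Hout].
  - apply (pos_of_deriv_pos_at_zeros _ _ Hgap); [lra| |exact Ht].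
    intros s _ Hmeet. enough (p s < p' s) by lra.
    apply (speed_lt_where_positions_meet q p q' p'); auto; lra.
  - destruct (MVT_everywhere _ _ 0 t Hgap) as [c [Hc Hgapc]].
    rewrite Rmin_left in Hc by exact Ht.
    rewrite (speed_eq_2_of_ge_1 q p), (speed_eq_2_of_ge_1 q' p') in Hgapc by (auto; lra). lra.
Qed.
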